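(* Let $n\ge2$ and let $T=(n;\sigma,\delta,\sigma)$ with $\sigma,\delta\in\mathbb{R}$, $\sigma\ne0$. Then the eigenvalues $\lambda_h=\delta+2\sigma\cos\frac{h\pi}{n+1}$ have $\mathcal S_{\mathcal T}$-structured condition numbers \[ \kappa_{\mathcal S_{\mathcal T}}(\lambda_h)=\sqrt{\frac1n+\frac2{n-1}\cos^2\frac{h\pi}{n+1}},\qquad h=1,\dots,n. \]
   Context: $(n;\sigma,\delta,\tau)$ is the $n\times n$ tridiagonal Toeplitz matrix with diagonal $\delta$, superdiagonal $\tau$, subdiagonal $\sigma$. For $T=(n;\sigma,\delta,\sigma)$ real, the unit vector $\widetilde x_h$ proportional to $(\sin\frac{hk\pi}{n+1})_{k=1}^n$ is a right and left eigenvector for $\lambda_h$, $\kappa(\lambda_h)=1$, and $W_h=\widetilde x_h\widetilde x_h^H$. $\mathcal S_{\mathcal T}$ denotes the real subspace of real symmetric $n\times n$ tridiagonal Toeplitz matrices; $W_h|_{\mathcal S_{\mathcal T}}$ is the orthogonal projection of $W_h$ onto $\mathcal S_{\mathcal T}$ with respect to the (real) Frobenius inner product $\mathrm{Re}\,\mathrm{tr}(A^HB)$, and $\kappa_{\mathcal S_{\mathcal T}}(\lambda_h)=\kappa(\lambda_h)\|W_h|_{\mathcal S_{\mathcal T}}\|_F$. *)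

From mathcomp Require Import all_boot all_order all_algebra.
From mathcomp Require Import all_classical all_reals all_analysis.
Set Implicit Arguments. Unset Strict Implicit. Unset Printing Implicit Defensive.
Import Order.TTheory GRing.Theory Num.Theory.
Local Open Scope ring_scope.

Definition tridiag {R : realType} (n : nat) (sigma delta tau : R) : 'M[R]_n :=
  \matrix_(i < n, j < n)
    if i == j :> nat then delta
    else if j == i.+1 :> nat then tau
    else if i == j.+1 :> nat then sigma
    else 0.

(* real Frobenius inner product Re tr(A^H B) for real matrices, and its norm *)
Definition frob_inner {R : realType} (n : nat) (A B : 'M[R]_n) : R :=
  \sum_(i < n) \sum_(j < n) A i j * B i j.
Definition frob_norm {R : realType} (n : nat) (A : 'M[R]_n) : R :=
  Num.sqrt (frob_inner A A).

Definition in_ST {R : realType} (n : nat) (A : 'M[R]_n) : Prop :=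
  exists sigma delta : R, A = tridiag n sigma delta sigma.

Definition is_proj_ST {R : realType} (n : nat) (W P : 'M[R]_n) : Prop :=
  in_ST P /\ forall A, in_ST A -> frob_inner (W - P) A = 0.

Definition vdot {R : realType} (n : nat) (x y : 'cV[R]_n) : R :=
  \sum_(k < n) x k ord0 * y k ord0.
Definition vnorm {R : realType} (n : nat) (x : 'cV[R]_n) : R :=
  Num.sqrt (vdot x x).

Definition lambda_h {R : realType} (n h : nat) (sigma delta : R) : R :=
  delta + 2 * sigma * cos (h%:R * pi / (n.+1)%:R).

Definition xsin {R : realType} (n h : nat) : 'cV[R]_n :=
  \col_(k < n) sin (h%:R * (k.+1)%:R * pi / (n.+1)%:R).
Definition xtilde {R : realType} (n h : nat) : 'cV[R]_n :=
  (vnorm (xsin n h))^-1 *: xsin n h.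

(* condition number of a simple eigenvalue with right eigenvector x and
   left eigenvector y: ||x|| ||y|| / |y^H x|; here x = y = xtilde *)
Definition kappa_eig {R : realType} (n : nat) (x y : 'cV[R]_n) : R :=
  vnorm x * vnorm y / `|vdot y x|.
Definition kappa_h {R : realType} (n h : nat) : R :=
  kappa_eig (xtilde n h) (xtilde n h).

Definition W_h {R : realType} (n h : nat) : 'M[R]_n :=
  xtilde n h *m (xtilde n h)^T.

From mathcomp Require Import all_boot all_order all_algebra.
From mathcomp Require Import all_classical all_reals all_analysis.
From mathcomp Require Import zify ring.
Set Implicit Arguments. Unset Strict Implicit. Unset Printing Implicit Defensive.
Import Order.TTheory GRing.Theory Num.Theory.
Local Open Scope ring_scope.

(* The matrices tridiag 0 1 0 and tridiag 1 0 1 are an orthogonal basis of S_T,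
   of squared norms n and 2(n-1), so the projection of any W onto S_T has
   diagonal tr W / n and off-diagonal entries (s_+ + s_-) / (2(n-1)), where
   s_+ and s_- are the sums of the super- and subdiagonal of W.  For the
   rank-one W_h = x x^T with x the unit sine vector, tr W_h = 1 and
   s_+ = s_- = sum_k x_k x_(k+1) = cos(h pi/(n+1)): this follows from the
   recurrence sin((k+1)t) + sin((k-1)t) = 2 cos t sin(k t) together with
   sin 0 = sin((n+1)t) = 0.  As x is both a left and a right unit eigenvector,
   kappa(lambda_h) = 1, and ||P||_F^2 = n (1/n)^2 + 2(n-1) (cos/(n-1))^2. *)

Lemma frob_innerBl (R : realType) (m : nat) (A B C : 'M[R]_m) :
  frob_inner (A - B) C = frob_inner A C - frob_inner B C.
Proof.
rewrite /frob_inner -sumrB; apply: eq_bigr => i _.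
by rewrite -sumrB; apply: eq_bigr => j _; rewrite !mxE mulrBl.
Qed.

Lemma val_inord_widen n (i : 'I_n) : (inord i : 'I_n.+1) = i :> nat.
Proof. exact/inordK/leqW. Qed.

Lemma val_inord_succ n (i : 'I_n) : (inord i.+1 : 'I_n.+1) = i.+1 :> nat.
Proof. exact: (@inordK n i.+1 (ltn_ord i)). Qed.

Lemma sum_diag_indicator (R : realType) m (F : 'I_m -> 'I_m -> R) :
  \sum_i \sum_j F i j * (i == j :> nat)%:R = \sum_i F i i.
Proof.
apply: eq_bigr => i _; under eq_bigr => j _ do rewrite mulr_natr mulrb.
by rewrite -big_mkcond (big_pred1 i) // => j; rewrite eq_sym.
Qed.

Section BandSums.
Variables (R : realType) (n : nat).
Implicit Types (M W : 'M[R]_n.+1) (s d t : R).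

Definition superdiag_sum M : R := \sum_(i < n) M (inord i) (inord i.+1).
Definition subdiag_sum M : R := \sum_(i < n) M (inord i.+1) (inord i).

Lemma sum_superdiag_indicator (F : 'I_n.+1 -> 'I_n.+1 -> R) :
  \sum_i \sum_j F i j * (j == i.+1 :> nat)%:R = \sum_(i < n) F (inord i) (inord i.+1).
Proof.
rewrite big_ord_recr /= [X in _ + X]big1 ?addr0 => [|j _]; last first.
  by rewrite /= ltn_eqF ?mulr0.
apply: eq_bigr => i _.
under eq_bigr => j _ do rewrite mulr_natr mulrb.
rewrite -big_mkcond (big_pred1 (inord i.+1)) => [|j]; last first.
  by rewrite /= -[RHS]val_eqE /= val_inord_succ.
suff -> : widen_ord (leqnSn n) i = inord i by [].
by apply: val_inj; rewrite /= val_inord_widen.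
Qed.

Lemma tridiagE s d t i j : tridiag n.+1 s d t i j =
  d * (i == j :> nat)%:R + t * (j == i.+1 :> nat)%:R + s * (i == j.+1 :> nat)%:R.
Proof.
rewrite mxE; case: eqP => [ij|_]; case: eqP => [ji|_]; case: eqP => [ij'|_];
  rewrite ?mulr1 ?mulr0 ?addr0 ?add0r //; lia.
Qed.

Lemma frob_inner_tridiag M s d t :
  frob_inner M (tridiag n.+1 s d t) =
  d * \tr M + t * superdiag_sum M + s * subdiag_sum M.
Proof.
rewrite /frob_inner.
under eq_bigr => i _ do under eq_bigr => j _ do
  rewrite tridiagE !mulrDr ![M i j * (_ * _)]mulrCA.
under eq_bigr => i _ do rewrite !big_split /= -!mulr_sumr.
rewrite !big_split /= -!mulr_sumr sum_diag_indicator sum_superdiag_indicator.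
by rewrite exchange_big sum_superdiag_indicator.
Qed.

Lemma mxtrace_tridiag s d t : \tr (tridiag n.+1 s d t) = d *+ n.+1.
Proof.
by rewrite /mxtrace (eq_bigr (fun=> d)) ?sumr_const ?card_ord // => i _; rewrite mxE eqxx.
Qed.

Lemma superdiag_sum_tridiag s d t : superdiag_sum (tridiag n.+1 s d t) = t *+ n.
Proof.
rewrite /superdiag_sum (eq_bigr (fun=> t)) ?sumr_const ?card_ord // => i _.
by rewrite mxE val_inord_widen val_inord_succ (ltn_eqF (ltnSn i)) eqxx.
Qed.

Lemma subdiag_sum_tridiag s d t : subdiag_sum (tridiag n.+1 s d t) = s *+ n.
Proof.
rewrite /subdiag_sum (eq_bigr (fun=> s)) ?sumr_const ?card_ord // => i _.
rewrite mxE val_inord_widen val_inord_succ (gtn_eqF (ltnSn i)).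
by rewrite (ltn_eqF (ltnW (ltnSn i.+1))) eqxx.
Qed.

Definition proj_ST W : 'M[R]_n.+1 :=
  let s := (superdiag_sum W + subdiag_sum W) / (n%:R *+ 2) in
  tridiag n.+1 s (\tr W / n.+1%:R) s.

Lemma frob_inner_sub_tridiag W s d s' d' :
  frob_inner (W - tridiag n.+1 s d s) (tridiag n.+1 s' d' s') =
  d' * (\tr W - d *+ n.+1) + s' * (superdiag_sum W + subdiag_sum W - s *+ 2 *+ n).
Proof.
rewrite frob_innerBl !frob_inner_tridiag mxtrace_tridiag.
rewrite superdiag_sum_tridiag subdiag_sum_tridiag; ring.
Qed.

Hypothesis n_gt0 : (0 < n)%N.

Let n_neq0 : n%:R != 0 :> R. Proof. by rewrite pnatr_eq0 -lt0n. Qed.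
Let n1_neq0 : 1 + n%:R != 0 :> R. Proof. by rewrite nat1r pnatr_eq0. Qed.

Lemma is_proj_STP W P : is_proj_ST W P <-> P = proj_ST W.
Proof.
split=> [[[s [d ->]] orth]|->].
  have /eqP := orth (tridiag n.+1 0 1 0) (ex_intro _ 0 (ex_intro _ 1 erefl)).
  rewrite frob_inner_sub_tridiag mul0r addr0 mul1r subr_eq0 => /eqP trW.
  have /eqP := orth (tridiag n.+1 1 0 1) (ex_intro _ 1 (ex_intro _ 0 erefl)).
  rewrite frob_inner_sub_tridiag mul0r add0r mul1r subr_eq0 => /eqP offW.
  by rewrite /proj_ST trW offW; congr tridiag; field.
split=> [|_ [s' [d' ->]]]; first by do 2 eexists.
by rewrite frob_inner_sub_tridiag; field; rewrite n_neq0 n1_neq0.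
Qed.

Lemma frob_norm_proj_ST W : frob_norm (proj_ST W) =
  Num.sqrt (\tr W ^+ 2 / n.+1%:R + (superdiag_sum W + subdiag_sum W) ^+ 2 / (n%:R *+ 2)).
Proof.
rewrite /frob_norm /proj_ST frob_inner_tridiag mxtrace_tridiag.
rewrite superdiag_sum_tridiag subdiag_sum_tridiag; congr Num.sqrt.
by field; rewrite n_neq0 n1_neq0.
Qed.

End BandSums.

Section Vectors.
Variable R : realType.

Lemma vdot_ge0 m (x : 'cV[R]_m) : 0 <= vdot x x.
Proof. by apply: sumr_ge0 => i _; rewrite -expr2 sqr_ge0. Qed.

Lemma vnorm_sqr m (x : 'cV[R]_m) : vnorm x ^+ 2 = vdot x x.
Proof. exact/sqr_sqrtr/vdot_ge0. Qed.

Lemma vdotZ m a (x : 'cV[R]_m) : vdot (a *: x) (a *: x) = a ^+ 2 * vdot x x.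
Proof. by rewrite /vdot mulr_sumr; apply: eq_bigr => i _; rewrite !mxE; ring. Qed.

Lemma vdot_normalize m (x : 'cV[R]_m) :
  vdot x x != 0 -> vdot ((vnorm x)^-1 *: x) ((vnorm x)^-1 *: x) = 1.
Proof. by move=> x_neq0; rewrite vdotZ exprVn vnorm_sqr mulVf. Qed.

Lemma kappa_eig_self m (x : 'cV[R]_m) : vdot x x != 0 -> kappa_eig x x = 1.
Proof.
by move=> x_neq0; rewrite /kappa_eig -expr2 vnorm_sqr ger0_norm ?vdot_ge0 ?divff.
Qed.

Definition vdot_shift n (x : 'cV[R]_n.+1) : R :=
  \sum_(i < n) x (inord i) 0 * x (inord i.+1) 0.

Lemma vdot_shiftZ n a (x : 'cV[R]_n.+1) :
  vdot_shift (a *: x) = a ^+ 2 * vdot_shift x.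
Proof. by rewrite /vdot_shift mulr_sumr; apply: eq_bigr => i _; rewrite !mxE; ring. Qed.

Lemma outer_mxE m (x : 'cV[R]_m) i j : (x *m x^T) i j = x i 0 * x j 0.
Proof. by rewrite !mxE big_ord1 !mxE. Qed.

Lemma mxtrace_outer m (x : 'cV[R]_m) : \tr (x *m x^T) = vdot x x.
Proof. by apply: eq_bigr => i _; rewrite outer_mxE. Qed.

Lemma superdiag_sum_outer n (x : 'cV[R]_n.+1) :
  superdiag_sum (x *m x^T) = vdot_shift x.
Proof. by apply: eq_bigr => i _; rewrite outer_mxE. Qed.

Lemma subdiag_sum_outer n (x : 'cV[R]_n.+1) :
  subdiag_sum (x *m x^T) = vdot_shift x.
Proof. by apply: eq_bigr => i _; rewrite outer_mxE mulrC. Qed.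

End Vectors.

Section SineEigenvector.
Variable R : realType.

Lemma sin_natmulpi k : sin (k%:R * pi) = 0 :> R.
Proof.
elim: k => [|k IHk]; first by rewrite mul0r sin0.
by rewrite -natr1 mulrDl mul1r sinDpi IHk oppr0.
Qed.

Lemma sinSS_add (x : R) k :
  sin (k.+2%:R * x) + sin (k%:R * x) = 2 * cos x * sin (k.+1%:R * x).
Proof.
have -> : k.+2%:R * x = k.+1%:R * x + x by rewrite -natr1 mulrDl mul1r.
have -> : k%:R * x = k.+1%:R * x - x by rewrite -natr1 mulrDl mul1r addrK.
by rewrite sinD sinB; ring.
Qed.

Lemma sum_sin_shift (x : R) N : sin (N.+2%:R * x) = 0 ->
  \sum_(k < N) sin (k.+1%:R * x) * sin (k.+2%:R * x) =
  cos x * \sum_(k < N.+1) sin (k.+1%:R * x) ^+ 2.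
Proof.
move=> sin_end.
set A := \sum_(k < N) _; set S := \sum_(k < N.+1) _.
have up : \sum_(k < N.+1) sin (k.+1%:R * x) * sin (k.+2%:R * x) = A.
  by rewrite big_ord_recr /= sin_end mulr0 addr0.
have down : \sum_(k < N.+1) sin (k%:R * x) * sin (k.+1%:R * x) = A.
  by rewrite big_ord_recl /= mul0r sin0 mul0r add0r.
(* Both shifted sums equal A because their boundary terms contain sin 0 or sin ((N+2) x). *)
have recurrence : 2 * cos x * S = A + A.
  rewrite -{1}up -down mulr_sumr -big_split; apply: eq_bigr => k _ /=.
  by rewrite expr2 mulrA -sinSS_add; ring.
have two_neq0 : 2 != 0 :> R by rewrite pnatr_eq0.
by apply: (mulfI two_neq0); rewrite mulrA recurrence; ring.
Qed.

Lemma xsinE n h (k : 'I_n) :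
  xsin n h k 0 = sin (k.+1%:R * (h%:R * pi / n.+1%:R)) :> R.
Proof. by rewrite mxE; congr sin; ring. Qed.

Lemma vdot_xsin_gt0 N h : (0 < h < N.+2)%N ->
  0 < vdot (xsin N.+1 h) (xsin N.+1 h) :> R.
Proof.
move=> /andP[h_gt0 h_lt].
have angle_gt0 : 0 < h%:R * pi / N.+2%:R :> R.
  by rewrite divr_gt0 ?mulr_gt0 ?pi_gt0 ?ltr0n.
have angle_ltpi : h%:R * pi / N.+2%:R < pi :> R.
  by rewrite ltr_pdivrMr ?ltr0n // mulrC ltr_pM2l ?pi_gt0 ?ltr_nat.
have sin_gt0 : 0 < sin (h%:R * pi / N.+2%:R) :> R.
  by apply: sin_gt0_pi; rewrite angle_gt0 angle_ltpi.
rewrite /vdot big_ord_recl xsinE mul1r -expr2.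
apply: (lt_le_trans (exprn_gt0 2 sin_gt0)).
by rewrite lerDl; apply: sumr_ge0 => i _; rewrite -expr2 sqr_ge0.
Qed.

Lemma vdot_shift_xsin N h :
  vdot_shift (xsin N.+1 h) =
  cos (h%:R * pi / N.+2%:R) * vdot (xsin N.+1 h) (xsin N.+1 h) :> R.
Proof.
rewrite /vdot_shift /vdot.
under eq_bigr => i _ do rewrite !xsinE val_inord_widen val_inord_succ.
under [in RHS]eq_bigr => i _ do rewrite xsinE -expr2.
by apply: sum_sin_shift; rewrite mulrC divfK ?pnatr_eq0 // sin_natmulpi.
Qed.

Variables (N h : nat).
Hypothesis h_range : (0 < h < N.+2)%N.

Lemma vdot_xtilde : vdot (xtilde N.+1 h) (xtilde N.+1 h) = 1 :> R.
Proof. exact/vdot_normalize/lt0r_neq0/vdot_xsin_gt0. Qed.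

Lemma vdot_shift_xtilde :
  vdot_shift (xtilde N.+1 h) = cos (h%:R * pi / N.+2%:R) :> R.
Proof.
rewrite vdot_shiftZ vdot_shift_xsin exprVn vnorm_sqr mulrCA mulVf ?mulr1 //.
exact/lt0r_neq0/vdot_xsin_gt0.
Qed.

Lemma kappa_h_eq1 : kappa_h N.+1 h = 1 :> R.
Proof. by apply: kappa_eig_self; rewrite vdot_xtilde oner_neq0. Qed.

End SineEigenvector.

Theorem proposition14 (R : realType) (n : nat) (sigma delta : R) :
  (2 <= n)%N -> sigma != 0 ->
  forall h : nat, (1 <= h <= n)%N ->
    (exists P : 'M[R]_n, is_proj_ST (W_h n h) P) /\
    (forall P : 'M[R]_n, is_proj_ST (W_h n h) P ->
      kappa_h n h * frob_norm P =
      Num.sqrt (1 / n%:R + 2 / (n.-1)%:R * cos (h%:R * pi / (n.+1)%:R) ^+ 2)).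
Proof.
(* Neither the projection nor the eigenvectors depend on sigma and delta. *)
case: n => [//|n] n_gt0 _ h h_range.
have tr_W : \tr (W_h n.+1 h) = 1 :> R by rewrite mxtrace_outer vdot_xtilde.
have offdiag_W : superdiag_sum (W_h n.+1 h) + subdiag_sum (W_h n.+1 h) =
    cos (h%:R * pi / n.+2%:R) *+ 2 :> R.
  by rewrite superdiag_sum_outer subdiag_sum_outer vdot_shift_xtilde.
split=> [|P /(is_proj_STP n_gt0) ->].
  by exists (proj_ST (W_h n.+1 h)); apply/is_proj_STP.
rewrite kappa_h_eq1 // mul1r frob_norm_proj_ST // tr_W offdiag_W /=.
by congr Num.sqrt; field; rewrite nat1r !pnatr_eq0 andbT -lt0n.
Qed.
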